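(* Let $(\Omega,\mathcal A)$ be a Borel space, $(\Omega,X_\bullet)$ a Borel field of complete metric spaces, and $F_\bullet$ a subfield with $F_\omega$ closed in $X_\omega$ for every $\omega$. The following are equivalent: (i) $F_\bullet$ is a Borel subfield; (ii) $\omega\mapsto d_\omega(x_\omega,F_\omega)\in[0,\infty]$ is Borel for every $x_\bullet\in\mathcal L(\Omega,X_\bullet)$; (iii) $\omega\mapsto d_\omega(x_\omega,F_\omega)$ is Borel for every $x_\bullet$ in some fundamental family $\mathcal D$ of $\mathcal L(\Omega,X_\bullet)$. (Convention: $d(x,\emptyset)=\infty$.)
   Context: Borel field of metric spaces: $(X_\omega,d_\omega)_{\omega\in\Omega}$ metric spaces; a section is $x_\bullet=(x_\omega)$, $x_\omega\in X_\omega$. A Borel structure is a set $\mathcal L(\Omega,X_\bullet)$ of sections such that (a) $\omega\mapsto d_\omega(x_\omega,y_\omega)$ is Borel for all $x_\bullet,y_\bullet\in\mathcal L$; (b) any section $y_\bullet$ with $\omega\mapsto d_\omega(x_\omega,y_\omega)$ Borel for all $x_\bullet\in\mathcal L$ lies in $\mathcal L$; (c) there is a countable $\mathcal D=\{x^n_\bullet\}\subseteq\mathcal L$ (fundamental family) with $\{x^n_\omega\}_n$ dense in $X_\omega$ for all $\omega$. For Borel $\Omega'$, $\mathcal L(\Omega',X_\bullet)$ = restrictions to $\Omega'$ of Borel sections. A subfield is $A_\bullet=(A_\omega)$ with $A_\omega\subseteq X_\omega$ (possibly empty); it is Borel if $\Omega'=\{\omega:A_\omega\ne\emptyset\}\in\mathcal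 A$ and there are countably many $y^n_\bullet\in\mathcal L(\Omega',X_\bullet)$ with $y^n_\omega\in A_\omega$ and $A_\omega\subseteq\overline{\{y^n_\omega\}_n}$ for all $\omega\in\Omega'$. *)

From Stdlib Require Import Reals Lra Classical ClassicalEpsilon.
Open Scope R_scope.

Set Implicit Arguments.

Definition sigma_algebra (Omega : Type) (A : (Omega -> Prop) -> Prop) : Prop :=
  A (fun _ => True) /\
  (forall S, A S -> A (fun w => ~ S w)) /\
  (forall S : nat -> Omega -> Prop, (forall n, A (S n)) -> A (fun w => exists n, S n w)).

Definition borel_of (T : Type) (opens : (T -> Prop) -> Prop) (B : T -> Prop) : Prop :=
  forall S : (T -> Prop) -> Prop, sigma_algebra S -> (forall U, opens U -> S U) -> S B.

Definition measurable_wrt (Omega T : Type) (A : (Omega -> Prop) -> Prop)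
  (opens : (T -> Prop) -> Prop) (f : Omega -> T) : Prop :=
  forall B, borel_of opens B -> A (fun w => B (f w)).

Definition R_open (U : R -> Prop) : Prop :=
  forall x, U x -> exists eps, 0 < eps /\ forall y, Rabs (y - x) < eps -> U y.

(** Extended reals with +infinity (values of distances lie in [0, +oo]). *)
Inductive ereal : Type := Fin (r : R) | PInf.

(** Order topology of (-oo, +oo]; restricted to [0,+oo] this is the usual topology. *)
Definition ereal_open (U : ereal -> Prop) : Prop :=
  (forall r, U (Fin r) -> exists eps, 0 < eps /\ forall s, Rabs (s - r) < eps -> U (Fin s)) /\
  (U PInf -> exists M, forall s, M < s -> U (Fin s)).

Definition measurable_R Omega (A : (Omega -> Prop) -> Prop) (f : Omega -> R) :=
  measurable_wrt A R_open f.
Definition measurable_ereal Omega (A : (Omega -> Prop) -> Prop) (f : Omega -> ereal) :=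
  measurable_wrt A ereal_open f.

Definition is_metric (X : Type) (d : X -> X -> R) : Prop :=
  (forall x y, d x y = 0 <-> x = y) /\
  (forall x y, d x y = d y x) /\
  (forall x y z, d x z <= d x y + d y z).

Definition complete_metric (X : Type) (d : X -> X -> R) : Prop :=
  forall u : nat -> X,
    (forall eps, 0 < eps -> exists N, forall m n, (N <= m)%nat -> (N <= n)%nat -> d (u m) (u n) < eps) ->
    exists l, forall eps, 0 < eps -> exists N, forall n, (N <= n)%nat -> d (u n) l < eps.

Definition closed_in (X : Type) (d : X -> X -> R) (F : X -> Prop) : Prop :=
  forall a, (forall eps, 0 < eps -> exists y, F y /\ d a y < eps) -> F a.

Definition is_glb (E : R -> Prop) (m : R) : Prop :=
  (forall x, E x -> m <= x) /\ (forall b, (forall x, E x -> b <= x) -> b <= m).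

Definition edist_set (X : Type) (d : X -> X -> R) (x : X) (F : X -> Prop) : ereal :=
  epsilon (inhabits PInf)
    (fun e => ((~ exists y, F y) /\ e = PInf) \/
              ((exists y, F y) /\ exists r, e = Fin r /\ is_glb (fun t => exists y, F y /\ t = d x y) r)).

(** Countable set of sections (possibly empty): enumerated by nat -> option. *)
Definition countable_set (S : Type) (D : S -> Prop) : Prop :=
  exists f : nat -> option S, forall x, D x <-> exists n, f n = Some x.

Section Fields.
Context {Omega : Type} {X : Omega -> Type}.
Variable (d : forall w, X w -> X w -> R).
Arguments d : clear implicits.

Definition section : Type := forall w, X w.

Definition fundamental_family (L : section -> Prop) (D : section -> Prop) : Prop :=
  countable_set D /\ (forall x, D x -> L x) /\
  (forall w (a : X w) eps, 0 < eps -> exists x, D x /\ d w a (x w) < eps).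

Definition borel_structure (A : (Omega -> Prop) -> Prop) (L : section -> Prop) : Prop :=
  (forall x y, L x -> L y -> measurable_R A (fun w => d w (x w) (y w))) /\
  (forall y : section, (forall x, L x -> measurable_R A (fun w => d w (x w) (y w))) -> L y) /\
  (exists D, fundamental_family L D).

(** A subfield A_w is Borel: Omega' = {w | A_w nonempty} is measurable and there are
    countably many (restrictions to Omega' of) Borel sections y^n with y^n_w in A_w and
    A_w contained in the closure of {y^n_w} for w in Omega'. *)
Definition borel_subfield (A : (Omega -> Prop) -> Prop) (L : section -> Prop)
  (F : forall w, X w -> Prop) : Prop :=
  let Omega' := fun w => exists a, F w a in
  A Omega' /\
  exists y : nat -> option section,
    (forall n z, y n = Some z -> L z) /\
    (forall w, Omega' w ->
       (forall n z, y n = Some z -> F w (z w)) /\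
       (forall a, F w a -> forall eps, 0 < eps ->
          exists n z, y n = Some z /\ d w a (z w) < eps)).
End Fields.
Arguments section {Omega} X.

From Stdlib Require Cantor.
From Stdlib Require Import ZArith Reals Lra Lia Classical ClassicalEpsilon.
From Stdlib Require Import FunctionalExtensionality PropExtensionality.
Open Scope R_scope.

(** - (i) => (ii): [d(x, F) < c] exactly when [F] is nonempty and some of the countably
      many Borel sections [y^n] of [F] is within [c] of [x].
    - (ii) => (iii) is immediate, since a Borel structure has a fundamental family.
    - (iii) => (i): enumerate the fundamental family as a dense sequence [xs].  Starting
      near a given [xs k] at precision [2^-m], jump repeatedly to the first [xs n] that is
      twice as close to [F] and close to the current point.  The selections are Borel
      because the choice "first index satisfying a measurable condition" is measurable;
      the jumps form a Cauchy sequence whose limit is a Borel section of [F] within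
      [5 * 2^-m] of [xs k].  These limits, over all [k] and [m], witness (i). *)

Section SigmaAlgebra.
Context {Omega : Type} {A : (Omega -> Prop) -> Prop}.

Lemma sa_ext {S S' : Omega -> Prop} : A S -> (forall w, S w <-> S' w) -> A S'.
Proof.
  intros HS E. replace S' with S; [exact HS|].
  apply functional_extensionality; intro w; apply propositional_extensionality, E.
Qed.

Hypothesis hA : sigma_algebra A.

Lemma sa_compl {S : Omega -> Prop} : A S -> A (fun w => ~ S w).
Proof. apply hA. Qed.

Lemma sa_countable_union {S : nat -> Omega -> Prop} :
  (forall n, A (S n)) -> A (fun w => exists n, S n w).
Proof. apply hA. Qed.

(* A predicate that does not depend on the point is either everything or nothing. *)
Lemma sa_const (P : Prop) : A (fun _ => P).
Proof.
  destruct hA as [Hfull [Hcompl _]].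
  destruct (classic P) as [p | np].
  - apply (sa_ext Hfull); tauto.
  - apply (sa_ext (Hcompl _ Hfull)); tauto.
Qed.

Lemma sa_union {S T : Omega -> Prop} : A S -> A T -> A (fun w => S w \/ T w).
Proof.
  intros HS HT.
  apply (sa_ext (@sa_countable_union (fun n => match n with O => S | _ => T end)
                   (fun n => match n with O => HS | _ => HT end))).
  intro w; split.
  - intros [[|n] H]; auto.
  - intros [H | H]; [exists O | exists 1%nat]; exact H.
Qed.

Lemma sa_inter {S T : Omega -> Prop} : A S -> A T -> A (fun w => S w /\ T w).
Proof.
  intros HS HT.
  apply (sa_ext (sa_compl (sa_union (sa_compl HS) (sa_compl HT)))).
  intro w; tauto.
Qed.

Lemma sa_countable_inter {S : nat -> Omega -> Prop} :
  (forall n, A (S n)) -> A (fun w => forall n, S n w).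
Proof.
  intros HS.
  apply (sa_ext (sa_compl (sa_countable_union (fun n => sa_compl (HS n))))).
  intro w; split.
  - intros H n. apply NNPP. intro Hn. apply H. exists n. exact Hn.
  - intros H [n Hn]. exact (Hn (H n)).
Qed.

End SigmaAlgebra.

Lemma measurable_of_opens {Omega T : Type} (A : (Omega -> Prop) -> Prop)
  (opens : (T -> Prop) -> Prop) (f : Omega -> T) :
  sigma_algebra A -> (forall U, opens U -> A (fun w => U (f w))) -> measurable_wrt A opens f.
Proof.
  intros [Hfull [Hcompl Hunion]] HU B HB.
  apply (HB (fun B => A (fun w => B (f w)))); [|exact HU].
  split; [exact Hfull | split].
  - intros S. apply Hcompl.
  - intros S HS. exact (Hunion (fun n w => S n (f w)) HS).
Qed.

Lemma open_is_borel {T : Type} {opens : (T -> Prop) -> Prop} {U : T -> Prop} :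
  opens U -> borel_of opens U.
Proof. intros HU S _ H. exact (H U HU). Qed.

Lemma open_ray_below (c : R) : R_open (fun t => t < c).
Proof.
  intros x Hx. exists (c - x). split; [lra|].
  intros y Hy. apply Rabs_def2 in Hy. lra.
Qed.

Lemma measurable_R_sublevel {Omega : Type} {A : (Omega -> Prop) -> Prop} {f : Omega -> R} (c : R) :
  measurable_R A f -> A (fun w => f w < c).
Proof. intros Hf. exact (Hf _ (open_is_borel (open_ray_below c))). Qed.

Lemma inv_succ_pos (p : nat) : 0 < / INR (S p).
Proof. apply Rinv_0_lt_compat, lt_0_INR. lia. Qed.

Lemma inv_succ_small (e : R) : 0 < e -> exists p : nat, / INR (S p) < e.
Proof.
  intros He. destruct (archimed_cor1 e He) as [N [HN HN0]].
  exists (pred N). replace (S (pred N)) with N by lia. exact HN.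
Qed.

Lemma IZR_nat_diff (z : Z) : exists k l : nat, IZR z = INR k - INR l.
Proof.
  destruct (Z_le_gt_dec 0 z) as [Hz | Hz].
  - exists (Z.to_nat z), O. rewrite (INR_IZR_INZ (Z.to_nat z)), Z2Nat.id by exact Hz.
    simpl; ring.
  - exists O, (Z.to_nat (- z)). rewrite (INR_IZR_INZ (Z.to_nat (- z))), Z2Nat.id by lia.
    rewrite opp_IZR. simpl; ring.
Qed.

Definition grid_center (m k l : nat) : R := (INR k - INR l) / INR (S m).

Definition in_grid_cell (m k l : nat) (t : R) : Prop :=
  Rabs (t - grid_center m k l) < / INR (S m).

Lemma grid_cell_inside {U : R -> Prop} {y : R} :
  R_open U -> U y ->
  exists m k l, (forall t, in_grid_cell m k l t -> U t) /\ in_grid_cell m k l y.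
Proof.
  intros HU Hy. destruct (HU y Hy) as [eps [He Hball]].
  destruct (inv_succ_small (eps / 2)) as [m Hm]; [lra|].
  pose proof (inv_succ_pos m) as Hr0.
  set (N := INR (S m)) in *. set (r := / N) in *.
  assert (HN : 0 < N) by (apply lt_0_INR; lia).
  destruct (archimed (y * N)) as [Hup1 Hup2].
  set (z := (up (y * N) - 1)%Z).
  assert (Hz : IZR z <= y * N < IZR z + 1) by (unfold z; rewrite minus_IZR; simpl; lra).
  assert (Hcell : 0 <= y - IZR z * r < r).
  { replace (y - IZR z * r) with ((y * N - IZR z) * r) by (unfold r; field; lra).
    split; [apply Rmult_le_pos; lra|].
    rewrite <- (Rmult_1_l r) at 2. apply Rmult_lt_compat_r; lra. }
  destruct (IZR_nat_diff z) as [k [l Hkl]].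
  assert (Hc : grid_center m k l = IZR z * r) by (unfold grid_center; rewrite Hkl; reflexivity).
  exists m, k, l. unfold in_grid_cell. rewrite Hc. fold N r. split.
  - intros t Ht. apply Hball. apply Rabs_def2 in Ht. apply Rabs_def1; lra.
  - apply Rabs_def1; lra.
Qed.

Lemma measurable_R_of_sublevels {Omega : Type} (A : (Omega -> Prop) -> Prop) (f : Omega -> R) :
  sigma_algebra A -> (forall c, A (fun w => f w < c)) -> measurable_R A f.
Proof.
  intros hA Hsub.
  assert (Hsup : forall c, A (fun w => c < f w)).
  { intro c.
    apply (sa_ext (sa_countable_union hA (fun p => sa_compl hA (Hsub (c + / INR (S p)))))).
    intro w; split.
    - intros [p Hp]. pose proof (inv_succ_pos p). lra.
    - intros Hc. destruct (inv_succ_small (f w - c)) as [p Hp]; [lra|]. exists p. lra. }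
  assert (Hcell : forall m k l, A (fun w => in_grid_cell m k l (f w))).
  { intros m k l. unfold in_grid_cell.
    apply (sa_ext (sa_inter hA (Hsub (grid_center m k l + / INR (S m)))
                                (Hsup (grid_center m k l - / INR (S m))))).
    intro w; split.
    - intros [H1 H2]. apply Rabs_def1; lra.
    - intros H. apply Rabs_def2 in H. lra. }
  apply measurable_of_opens; [exact hA|]. intros U HU.
  apply (sa_ext (sa_countable_union hA (fun m => sa_countable_union hA (fun k =>
           sa_countable_union hA (fun l =>
             sa_inter hA (sa_const hA (forall t, in_grid_cell m k l t -> U t)) (Hcell m k l)))))).
  intro w; split.
  - intros [m [k [l [Hsub' Hw]]]]. exact (Hsub' _ Hw).
  - intros Hw. destruct (grid_cell_inside HU Hw) as [m [k [l H]]]. exists m, k, l. exact H.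
Qed.

Definition ereal_below (v : ereal) (c : R) : Prop :=
  match v with Fin r => r < c | PInf => False end.

Definition finite_part (v : ereal) : R :=
  match v with Fin r => r | PInf => 0 end.

Lemma measurable_ereal_sublevel {Omega : Type} {A : (Omega -> Prop) -> Prop}
  {f : Omega -> ereal} (c : R) :
  measurable_ereal A f -> A (fun w => ereal_below (f w) c).
Proof.
  intros Hf. apply (Hf (fun v => ereal_below v c)), open_is_borel.
  split; [|simpl; tauto].
  intros r Hr. exists (c - r). split; [simpl in Hr; lra|].
  intros s Hs. apply Rabs_def2 in Hs. simpl; lra.
Qed.

(* Reduced to the real case through the real part, on the measurable set where [f] is finite. *)
Lemma measurable_ereal_of_sublevels {Omega : Type} (A : (Omega -> Prop) -> Prop)
  (f : Omega -> ereal) :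
  sigma_algebra A -> (forall c, A (fun w => ereal_below (f w) c)) -> measurable_ereal A f.
Proof.
  intros hA Hsub.
  set (finite := fun w => exists n : nat, ereal_below (f w) (INR n)).
  assert (Hfinite : A finite) by exact (sa_countable_union hA (fun n => Hsub (INR n))).
  assert (finite_spec : forall w, finite w <-> f w <> PInf).
  { intro w. unfold finite. destruct (f w) as [r|]; simpl; split.
    - intros _; discriminate.
    - intros _. destruct (INR_unbounded r) as [n Hn]. exists n. lra.
    - intros [n []].
    - intros H; exfalso; apply H; reflexivity. }
  assert (Hpart : measurable_R A (fun w => finite_part (f w))).
  { apply measurable_R_of_sublevels; [exact hA|]. intro c.
    apply (sa_ext (sa_union hA (Hsub c) (sa_inter hA (sa_compl hA Hfinite) (sa_const hA (0 < c))))).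
    intro w. rewrite finite_spec. destruct (f w) as [r|]; simpl.
    - split; [intros [H | [H _]]; [exact H | exfalso; apply H; discriminate] | tauto].
    - split; [intros [[] | [_ H]]; exact H | auto]. }
  apply measurable_of_opens; [exact hA|]. intros U [HUfin _].
  assert (Hfin_part : A (fun w => U (Fin (finite_part (f w))))).
  { exact (Hpart (fun t => U (Fin t)) (open_is_borel HUfin)). }
  apply (sa_ext (sa_union hA (sa_inter hA Hfinite Hfin_part)
                             (sa_inter hA (sa_compl hA Hfinite) (sa_const hA (U PInf))))).
  intro w. rewrite finite_spec. destruct (f w) as [r|]; simpl.
  - split; [intros [[_ H] | [H _]]; [exact H | exfalso; apply H; discriminate] |].
    intros H. left. split; [discriminate | exact H].
  - split; [intros [[H _] | [_ H]]; [exfalso; apply H | exact H]; reflexivity |].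
    intros H. right. split; [intros H'; apply H'; reflexivity | exact H].
Qed.

Lemma measurable_R_limit {Omega : Type} {A : (Omega -> Prop) -> Prop}
  (g : nat -> Omega -> R) (h : Omega -> R) :
  sigma_algebra A -> (forall n, measurable_R A (g n)) ->
  (forall w eps, 0 < eps -> exists N, forall n, (N <= n)%nat -> Rabs (g n w - h w) < eps) ->
  measurable_R A h.
Proof.
  intros hA Hg Hlim. apply measurable_R_of_sublevels; [exact hA|]. intro c.
  (* [h w < c] iff eventually [g n w < c - 1/(p+1)] for some [p]. *)
  apply (sa_ext (sa_countable_union hA (fun p => sa_countable_union hA (fun N =>
           sa_countable_inter hA (fun i =>
             measurable_R_sublevel (c - / INR (S p)) (Hg (N + i)%nat))))));
  intro w; split.
  - intros [p [N HN]]. pose proof (inv_succ_pos p) as Hp.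
    destruct (Hlim w _ Hp) as [N' HN'].
    specialize (HN N'). specialize (HN' (N + N')%nat ltac:(lia)).
    apply Rabs_def2 in HN'. lra.
  - intros Hw. destruct (inv_succ_small ((c - h w) / 2)) as [p Hp]; [lra|].
    pose proof (inv_succ_pos p) as Hp0.
    destruct (Hlim w _ Hp0) as [N HN]. exists p, N. intro i.
    specialize (HN (N + i)%nat ltac:(lia)). apply Rabs_def2 in HN. lra.
Qed.

Section Metric.
Context {X : Type} {d : X -> X -> R} (hd : is_metric d).

Lemma metric_refl (x : X) : d x x = 0.
Proof. apply hd. reflexivity. Qed.

Lemma metric_sym (x y : X) : d x y = d y x.
Proof. apply hd. Qed.

Lemma metric_triangle (x y z : X) : d x z <= d x y + d y z.
Proof. apply hd. Qed.

Lemma glb_exists (E : R -> Prop) :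
  (exists x, E x) -> (forall x, E x -> 0 <= x) -> exists m, is_glb E m.
Proof.
  intros [x Hx] Hpos.
  destruct (completeness (fun t => E (- t))) as [m [Hub Hleast]].
  - exists 0. intros t Ht. specialize (Hpos _ Ht). lra.
  - exists (- x). rewrite Ropp_involutive. exact Hx.
  - exists (- m). split.
    + intros y Hy. assert (- y <= m) by (apply Hub; rewrite Ropp_involutive; exact Hy). lra.
    + intros b Hb. assert (m <= - b) by (apply Hleast; intros t Ht; specialize (Hb _ Ht); lra).
      lra.
Qed.

(* The only property of [d(x, F)] we use: it is below [c] iff some point of [F] is closer than [c]. *)
Lemma edist_below (x : X) (F : X -> Prop) (c : R) :
  ereal_below (edist_set d x F) c <-> exists a, F a /\ d x a < c.
Proof.
  assert (Hspec : ((~ exists y, F y) /\ edist_set d x F = PInf) \/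
                  ((exists y, F y) /\ exists r, edist_set d x F = Fin r /\
                     is_glb (fun t => exists y, F y /\ t = d x y) r)).
  { unfold edist_set. apply epsilon_spec.
    destruct (classic (exists y, F y)) as [Hne | Hempty].
    - destruct (glb_exists (fun t => exists y, F y /\ t = d x y)) as [r Hr].
      + destruct Hne as [y Hy]. eauto.
      + intros t [y [_ ->]].
        pose proof (metric_triangle x y x). rewrite metric_refl, (metric_sym y x) in H. lra.
      + exists (Fin r). right. eauto.
    - exists PInf. left. auto. }
  destruct Hspec as [[Hempty ->] | [_ [r [-> [Hlow Hgreatest]]]]]; simpl.
  - split; [tauto|]. intros [a [Ha _]]. eauto.
  - split.
    + intros Hrc. apply NNPP. intros Hfar.
      assert (c <= r).
      { apply Hgreatest. intros t [y [Hy ->]]. apply Rnot_lt_le. intro. apply Hfar. eauto. }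
      lra.
    + intros [a [Ha Hda]]. assert (r <= d x a) by (apply Hlow; eauto). lra.
Qed.

End Metric.

Section Selection.
Context {Omega : Type} {X : Omega -> Type}.

Definition least_index (P : nat -> Omega -> Prop) (n : nat) (w : Omega) : Prop :=
  P n w /\ forall k, P k w -> (n <= k)%nat.

Lemma least_index_exists (P : nat -> Omega -> Prop) (w : Omega) :
  (exists n, P n w) -> exists n, least_index P n w.
Proof.
  intros Hex.
  destruct (Wf_nat.dec_inh_nat_subset_has_unique_least_element (fun n => P n w)
              (fun n => classic (P n w)) Hex) as [n [Hn _]].
  exists n. exact Hn.
Qed.

Definition pick (xs : nat -> section X) (P : nat -> Omega -> Prop) (fb : section X) : section X :=
  fun w => match excluded_middle_informative (exists n, P n w) with
           | left _ => xs (epsilon (inhabits 0%nat) (fun n => least_index P n w)) w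
           | right _ => fb w
           end.

Lemma pick_least (xs : nat -> section X) {P : nat -> Omega -> Prop} (fb : section X) {n : nat} {w : Omega} :
  least_index P n w -> pick xs P fb w = xs n w.
Proof.
  intros [Hn Hleast]. unfold pick.
  destruct (excluded_middle_informative (exists n, P n w)) as [Hex | Hnone].
  - set (k := epsilon _ _).
    assert (Hkspec : least_index P k w) by (apply epsilon_spec; exists n; split; assumption).
    destruct Hkspec as [Hk Hkleast].
    replace k with n; [reflexivity|].
    apply Nat.le_antisymm; [apply Hleast, Hk | apply Hkleast, Hn].
  - exfalso. apply Hnone. exists n. exact Hn.
Qed.

Lemma pick_default (xs : nat -> section X) {P : nat -> Omega -> Prop} (fb : section X) {w : Omega} :
  ~ (exists n, P n w) -> pick xs P fb w = fb w.
Proof.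
  intros Hnone. unfold pick.
  destruct (excluded_middle_informative (exists n, P n w)) as [Hex | _]; [contradiction | reflexivity].
Qed.

Lemma sa_least_index {A : (Omega -> Prop) -> Prop} {P : nat -> Omega -> Prop} (n : nat) :
  sigma_algebra A -> (forall k, A (P k)) -> A (least_index P n).
Proof.
  intros hA HP. apply (sa_inter hA (HP n)).
  apply (sa_ext (sa_countable_inter hA (fun k => sa_union hA (sa_compl hA (HP k)) (sa_const hA (n <= k)%nat)))).
  intros w. split.
  - intros H k Hk. destruct (H k) as [H' | H']; [contradiction | exact H'].
  - intros H k. destruct (classic (P k w)) as [Hk | Hk]; [right; auto | left; exact Hk].
Qed.

Lemma measurable_pick {T : Type} {A : (Omega -> Prop) -> Prop} (opens : (T -> Prop) -> Prop)
  (xs : nat -> section X) {P : nat -> Omega -> Prop} (fb : section X)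
  (Phi : forall w, X w -> T) :
  sigma_algebra A -> (forall n, A (P n)) ->
  (forall n, measurable_wrt A opens (fun w => Phi w (xs n w))) ->
  measurable_wrt A opens (fun w => Phi w (fb w)) ->
  measurable_wrt A opens (fun w => Phi w (pick xs P fb w)).
Proof.
  intros hA HP Hxs Hfb B HB.
  apply (sa_ext (sa_union hA
           (sa_countable_union hA (fun n => sa_inter hA (sa_least_index n hA HP) (Hxs n B HB)))
           (sa_inter hA (sa_compl hA (sa_countable_union hA HP)) (Hfb B HB)))).
  intro w. destruct (classic (exists n, P n w)) as [Hex | Hnone].
  - destruct (least_index_exists P w Hex) as [n Hn]. rewrite (pick_least xs fb Hn).
    split.
    + intros [[k [Hk HBk]] | [Hnone _]]; [| contradiction].
      rewrite <- (pick_least xs fb Hk), (pick_least xs fb Hn) in HBk. exact HBk.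
    + intros HBn. left. exists n. split; assumption.
  - rewrite (pick_default xs fb Hnone). split.
    + intros [[k [[Hk _] _]] | [_ HBfb]]; [exfalso; apply Hnone; eauto | exact HBfb].
    + intros HBfb. right. split; assumption.
Qed.

End Selection.

Lemma half_pow_pos (n : nat) : 0 < (/ 2) ^ n.
Proof. apply pow_lt. lra. Qed.

Lemma half_pow_small (e : R) : 0 < e -> exists N, forall n, (N <= n)%nat -> (/ 2) ^ n < e.
Proof.
  intros He. destruct (pow_lt_1_zero (/ 2) ltac:(rewrite Rabs_right; lra) e He) as [N HN].
  exists N. intros n Hn. specialize (HN n Hn).
  rewrite Rabs_right in HN; [exact HN | apply Rle_ge, Rlt_le, half_pow_pos].
Qed.

Lemma le_of_le_plus_eps (a b : R) : (forall e, 0 < e -> a <= b + e) -> a <= b.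
Proof. intros H. apply Rnot_lt_le. intro Hlt. specialize (H ((a - b) / 2) ltac:(lra)). lra. Qed.

Section BorelField.
Context {Omega : Type} {X : Omega -> Type} (d : forall w, X w -> X w -> R)
  (A : (Omega -> Prop) -> Prop) (L : section X -> Prop) (F : forall w, X w -> Prop).
Hypothesis hA : sigma_algebra A.
Hypothesis hmet : forall w, is_metric (d w).
Hypothesis L_dist : forall x y, L x -> L y -> measurable_R A (fun w => d w (x w) (y w)).

Definition dist_to_F (s : section X) (w : Omega) : ereal := edist_set (d w) (s w) (F w).

(* (i) => (ii): [d(x, F) < c] iff [F] is nonempty and some [y^n] is within [c] of [x]. *)
Lemma dist_to_F_measurable_of_borel_subfield :
  borel_subfield d A L F -> forall x, L x -> measurable_ereal A (dist_to_F x).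
Proof.
  intros [HOmega' [y [Hy_L Hy]]] x Lx. apply measurable_ereal_of_sublevels; [exact hA|]. intro c.
  set (near := fun n w => match y n with Some z => d w (x w) (z w) < c | None => False end).
  assert (Hnear : forall n, A (near n)).
  { intro n. unfold near. destruct (y n) as [z|] eqn:Ez.
    - exact (measurable_R_sublevel c (L_dist _ _ Lx (Hy_L n z Ez))).
    - exact (sa_const hA False). }
  apply (sa_ext (sa_inter hA HOmega' (sa_countable_union hA Hnear))).
  intro w. unfold dist_to_F. rewrite (edist_below (hmet w)). split.
  - intros [Hw [n Hn]]. unfold near in Hn. destruct (y n) as [z|] eqn:Ez; [|contradiction].
    exists (z w). split; [exact (proj1 (Hy w Hw) n z Ez) | exact Hn].
  - intros [a [Ha Hda]]. assert (Hw : exists a, F w a) by (exists a; exact Ha).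
    split; [exact Hw|].
    destruct (proj2 (Hy w Hw) a Ha (c - d w (x w) a) ltac:(lra)) as [n [z [Ez Hz]]].
    exists n. unfold near. rewrite Ez.
    pose proof (metric_triangle (hmet w) (x w) a (z w)). lra.
Qed.

(** For each level [m] and each [xs k] close to [F],
    we start near [xs k] and repeatedly jump to the first [xs n] which is twice as close
    to [F] and close to the current point; completeness gives a limit in [F]. *)
Hypothesis hcomp : forall w, complete_metric (d w).
Hypothesis L_closed : forall y : section X,
  (forall x, L x -> measurable_R A (fun w => d w (x w) (y w))) -> L y.
Hypothesis hF : forall w, closed_in (d w) (F w).
Variable xs : nat -> section X.
Hypothesis xs_L : forall n, L (xs n).
Hypothesis xs_dist : forall n, measurable_ereal A (dist_to_F (xs n)).
Hypothesis xs_dense : forall w (a : X w) eps, 0 < eps -> exists n, d w a (xs n w) < eps.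

Definition good (s : section X) : Prop := L s /\ measurable_ereal A (dist_to_F s).

Lemma good_pick (P : nat -> Omega -> Prop) (fb : section X) :
  (forall n, A (P n)) -> good fb -> good (pick xs P fb).
Proof.
  intros HP [Lfb Mfb]. split.
  - apply L_closed. intros y Ly.
    exact (measurable_pick R_open xs fb (fun w v => d w (y w) v) hA HP
             (fun n => L_dist _ _ Ly (xs_L n)) (L_dist _ _ Ly Lfb)).
  - exact (measurable_pick ereal_open xs fb (fun w v => edist_set (d w) v (F w)) hA HP
             xs_dist Mfb).
Qed.

Definition jump_candidate (l : nat) (s : section X) (n : nat) (w : Omega) : Prop :=
  ereal_below (dist_to_F (xs n) w) ((/ 2) ^ S l) /\ d w (xs n w) (s w) < 2 * (/ 2) ^ l.

Definition jump (l : nat) (s : section X) : section X := pick xs (jump_candidate l s) s.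

Lemma jump_good (l : nat) (s : section X) : good s -> good (jump l s).
Proof.
  intros Hs. apply good_pick; [|exact Hs]. intro n.
  exact (sa_inter hA (measurable_ereal_sublevel _ (xs_dist n))
                     (measurable_R_sublevel _ (L_dist _ _ (xs_L n) (proj1 Hs)))).
Qed.

Lemma jump_close (l : nat) (s : section X) (w : Omega) : d w (s w) (jump l s w) <= 2 * (/ 2) ^ l.
Proof.
  unfold jump. destruct (classic (exists n, jump_candidate l s n w)) as [Hex | Hnone].
  - destruct (least_index_exists _ w Hex) as [n Hn].
    rewrite (pick_least xs s Hn), metric_sym by apply hmet.
    destruct Hn as [[_ Hclose] _]. lra.
  - rewrite (pick_default xs s Hnone), metric_refl by apply hmet.
    pose proof (half_pow_pos l). lra.
Qed.

Lemma jump_near_F (l : nat) (s : section X) (w : Omega) :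
  ereal_below (dist_to_F s w) ((/ 2) ^ l) -> ereal_below (dist_to_F (jump l s) w) ((/ 2) ^ S l).
Proof.
  unfold dist_to_F at 1. rewrite (edist_below (hmet w)). intros [a [Ha Hsa]].
  destruct (xs_dense w a _ (half_pow_pos (S l))) as [n Hn].
  assert (Hcand : jump_candidate l s n w).
  { split.
    - unfold dist_to_F. rewrite (edist_below (hmet w)). exists a.
      split; [exact Ha | rewrite metric_sym by apply hmet; exact Hn].
    - pose proof (metric_triangle (hmet w) (xs n w) a (s w)).
      rewrite (metric_sym (hmet w) (xs n w) a), (metric_sym (hmet w) a (s w)) in H.
      simpl in Hn. pose proof (half_pow_pos l). lra. }
  destruct (least_index_exists (jump_candidate l s) w (ex_intro _ n Hcand)) as [k Hk].
  unfold dist_to_F, jump. rewrite (pick_least xs s Hk). exact (proj1 (proj1 Hk)).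
Qed.

Fixpoint chain (s : section X) (m j : nat) : section X :=
  match j with
  | O => s
  | S j' => jump (m + j') (chain s m j')
  end.

Lemma chain_good (s : section X) (m j : nat) : good s -> good (chain s m j).
Proof. intros Hs. induction j as [|j IH]; [exact Hs | apply jump_good, IH]. Qed.

Lemma chain_near_F (s : section X) (m : nat) (w : Omega) :
  ereal_below (dist_to_F s w) ((/ 2) ^ m) ->
  forall j, ereal_below (dist_to_F (chain s m j) w) ((/ 2) ^ (m + j)).
Proof.
  intros Hs j. induction j as [|j IH].
  - rewrite Nat.add_0_r. exact Hs.
  - rewrite Nat.add_succ_r. exact (jump_near_F _ _ _ IH).
Qed.

(* Telescoping the geometric bound on consecutive jumps. *)
Lemma chain_close (s : section X) (m : nat) (w : Omega) (j i : nat) :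
  d w (chain s m j w) (chain s m (j + i) w) <= 4 * (/ 2) ^ (m + j) - 4 * (/ 2) ^ (m + j + i).
Proof.
  induction i as [|i IH].
  - rewrite !Nat.add_0_r, metric_refl by apply hmet. lra.
  - rewrite !Nat.add_succ_r. simpl chain. simpl pow.
    pose proof (jump_close (m + (j + i)) (chain s m (j + i)) w) as Hjump.
    set (next := jump (m + (j + i)) (chain s m (j + i))) in *.
    pose proof (metric_triangle (hmet w) (chain s m j w) (chain s m (j + i) w) (next w)).
    rewrite Nat.add_assoc in Hjump. lra.
Qed.

(* The chosen limit point of the chain at [w] (completeness guarantees one exists). *)
Definition chain_limit (s : section X) (m : nat) : section X :=
  fun w => epsilon (inhabits (s w))
    (fun l => forall eps, 0 < eps -> exists N, forall n, (N <= n)%nat -> d w (chain s m n w) l < eps).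

Lemma chain_limit_spec (s : section X) (m : nat) (w : Omega) :
  forall eps, 0 < eps -> exists N, forall n, (N <= n)%nat ->
    d w (chain s m n w) (chain_limit s m w) < eps.
Proof.
  unfold chain_limit. apply epsilon_spec, hcomp. intros eps He.
  destruct (half_pow_small (eps / 4)) as [N HN]; [lra|].
  assert (Hordered : forall p q, (N <= p)%nat -> (p <= q)%nat ->
            d w (chain s m p w) (chain s m q w) < eps).
  { intros p q Hp Hpq. replace q with (p + (q - p))%nat by lia.
    pose proof (chain_close s m w p (q - p)). pose proof (half_pow_pos (m + p + (q - p))).
    specialize (HN (m + p)%nat ltac:(lia)). lra. }
  exists N. intros p q Hp Hq. destruct (Nat.le_ge_cases p q) as [Hpq | Hqp].
  - exact (Hordered p q Hp Hpq).
  - rewrite metric_sym by apply hmet. exact (Hordered q p Hq Hqp).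
Qed.

(* The limit is Borel: distances to it are pointwise limits of distances to the chain. *)
Lemma chain_limit_L (s : section X) (m : nat) : good s -> L (chain_limit s m).
Proof.
  intros Hs. apply L_closed. intros y Ly.
  apply (measurable_R_limit (fun j w => d w (y w) (chain s m j w)) _ hA).
  - intro j. exact (L_dist _ _ Ly (proj1 (chain_good s m j Hs))).
  - intros w eps He. destruct (chain_limit_spec s m w _ He) as [N HN].
    exists N. intros n Hn. specialize (HN n Hn).
    pose proof (metric_triangle (hmet w) (y w) (chain s m n w) (chain_limit s m w)).
    pose proof (metric_triangle (hmet w) (y w) (chain_limit s m w) (chain s m n w)).
    rewrite (metric_sym (hmet w) (chain_limit s m w) (chain s m n w)) in H0.
    apply Rabs_def1; lra.
Qed.

(* The limit lies in the closed set [F], as the chain approaches [F]. *)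
Lemma chain_limit_in_F (s : section X) (m : nat) (w : Omega) :
  ereal_below (dist_to_F s w) ((/ 2) ^ m) -> F w (chain_limit s m w).
Proof.
  intros Hs. apply hF. intros eps He.
  destruct (chain_limit_spec s m w (eps / 2) ltac:(lra)) as [N1 HN1].
  destruct (half_pow_small (eps / 2)) as [N2 HN2]; [lra|].
  pose proof (chain_near_F s m w Hs (N1 + N2)) as Hnear.
  unfold dist_to_F in Hnear. rewrite (edist_below (hmet w)) in Hnear.
  destruct Hnear as [a [Ha Hda]].
  exists a. split; [exact Ha|].
  specialize (HN1 (N1 + N2)%nat ltac:(lia)). specialize (HN2 (m + (N1 + N2))%nat ltac:(lia)).
  pose proof (metric_triangle (hmet w) (chain_limit s m w) (chain s m (N1 + N2) w) a).
  rewrite (metric_sym (hmet w) (chain_limit s m w) (chain s m (N1 + N2) w)) in H. lra.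
Qed.

Lemma chain_limit_close (s : section X) (m : nat) (w : Omega) :
  d w (s w) (chain_limit s m w) <= 4 * (/ 2) ^ m.
Proof.
  apply le_of_le_plus_eps. intros e He.
  destruct (chain_limit_spec s m w _ He) as [N HN]. specialize (HN N (le_n N)).
  pose proof (chain_close s m w 0 N) as Hclose. simpl chain in Hclose.
  rewrite Nat.add_0_r in Hclose.
  pose proof (metric_triangle (hmet w) (s w) (chain s m N w) (chain_limit s m w)).
  pose proof (half_pow_pos (m + N)). lra.
Qed.

Definition near_F (m n : nat) (w : Omega) : Prop := ereal_below (dist_to_F (xs n) w) ((/ 2) ^ m).

Definition start_candidate (k m n : nat) (w : Omega) : Prop :=
  near_F m n w /\ d w (xs n w) (xs k w) < (/ 2) ^ m.

Definition start (k m : nat) : section X :=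
  pick xs (start_candidate k m) (pick xs (near_F m) (xs 0)).

Lemma start_good (k m : nat) : good (start k m).
Proof.
  assert (Hnear : forall n, A (near_F m n)) by (intro n; exact (measurable_ereal_sublevel _ (xs_dist n))).
  apply good_pick.
  - intro n. exact (sa_inter hA (Hnear n) (measurable_R_sublevel _ (L_dist _ _ (xs_L n) (xs_L k)))).
  - apply (good_pick _ _ Hnear). split; [apply xs_L | apply xs_dist].
Qed.

Lemma start_near_F (k m : nat) (w : Omega) :
  (exists a, F w a) -> ereal_below (dist_to_F (start k m) w) ((/ 2) ^ m).
Proof.
  intros [a Ha]. unfold start.
  destruct (classic (exists n, start_candidate k m n w)) as [Hex | Hnone].
  - destruct (least_index_exists _ w Hex) as [n Hn].
    unfold dist_to_F. rewrite (pick_least xs _ Hn). exact (proj1 (proj1 Hn)).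
  - unfold dist_to_F. rewrite (pick_default xs _ Hnone).
    destruct (xs_dense w a _ (half_pow_pos m)) as [n Hn].
    assert (Hnear : near_F m n w).
    { unfold near_F, dist_to_F. rewrite (edist_below (hmet w)). exists a.
      split; [exact Ha | rewrite metric_sym by apply hmet; exact Hn]. }
    destruct (least_index_exists (near_F m) w (ex_intro _ n Hnear)) as [n' Hn'].
    rewrite (pick_least xs _ Hn'). exact (proj1 Hn').
Qed.

Lemma start_close (k m : nat) (w : Omega) :
  near_F m k w -> d w (xs k w) (start k m w) < (/ 2) ^ m.
Proof.
  intros Hk.
  assert (Hself : start_candidate k m k w).
  { split; [exact Hk | rewrite metric_refl by apply hmet; apply half_pow_pos]. }
  destruct (least_index_exists (start_candidate k m) w (ex_intro _ k Hself)) as [n Hn].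
  unfold start. rewrite (pick_least xs _ Hn), metric_sym by apply hmet.
  exact (proj2 (proj1 Hn)).
Qed.

Lemma borel_subfield_of_dense_sequence : borel_subfield d A L F.
Proof.
  set (y := fun k m => chain_limit (start k m) m).
  split.
  - (* [F w] is nonempty iff [d(xs 0, F) < n] for some [n]. *)
    apply (sa_ext (sa_countable_union hA (fun n => measurable_ereal_sublevel (INR n) (xs_dist 0)))).
    intro w. unfold dist_to_F. setoid_rewrite (edist_below (hmet w)). split.
    + intros [n [a [Ha _]]]. exists a. exact Ha.
    + intros [a Ha]. destruct (INR_unbounded (d w (xs 0%nat w) a)) as [n Hn].
      exists n, a. split; [exact Ha | lra].
  - exists (fun n => let (k, m) := Cantor.of_nat n in Some (y k m)). split.
    + intros n z. destruct (Cantor.of_nat n) as [k m]. intros E. injection E as <-.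
      exact (chain_limit_L _ m (start_good k m)).
    + intros w Hw. split.
      * intros n z. destruct (Cantor.of_nat n) as [k m]. intros E. injection E as <-.
        exact (chain_limit_in_F _ m w (start_near_F k m w Hw)).
      * intros a Ha eps He.
        destruct (half_pow_small (eps / 6)) as [m Hm]; [lra|]. specialize (Hm m (le_n m)).
        destruct (xs_dense w a _ (half_pow_pos m)) as [k Hk].
        assert (Hnear : near_F m k w).
        { unfold near_F, dist_to_F. rewrite (edist_below (hmet w)). exists a.
          split; [exact Ha | rewrite metric_sym by apply hmet; exact Hk]. }
        exists (Cantor.to_nat (k, m)), (y k m). rewrite Cantor.cancel_of_to. split; [reflexivity|].
        pose proof (start_close k m w Hnear). pose proof (chain_limit_close (start k m) m w).
        pose proof (metric_triangle (hmet w) a (xs k w) (y k m w)).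
        pose proof (metric_triangle (hmet w) (xs k w) (start k m w) (y k m w)).
        unfold y in *. lra.
Qed.

End BorelField.

Lemma borel_subfield_of_fundamental_family {Omega : Type} {X : Omega -> Type}
  (d : forall w, X w -> X w -> R) (A : (Omega -> Prop) -> Prop) (L : section X -> Prop)
  (F : forall w, X w -> Prop) (hA : sigma_algebra A) (hmet : forall w, is_metric (d w))
  (hcomp : forall w, complete_metric (d w)) (hL : borel_structure d A L)
  (hF : forall w, closed_in (d w) (F w)) (D : section X -> Prop) :
  fundamental_family d L D -> (forall x, D x -> measurable_ereal A (dist_to_F d F x)) ->
  borel_subfield d A L F.
Proof.
  destruct hL as [L_dist [L_closed _]].
  intros [[f Hf] [HD_L HD_dense]] HD_dist.
  destruct (classic (exists x0, D x0)) as [[x0 Dx0] | Hempty].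
  - set (xs := fun n => match f n with Some z => z | None => x0 end).
    assert (xs_D : forall n, D (xs n)).
    { intro n. unfold xs. destruct (f n) as [z|] eqn:Ez; [apply Hf; exists n; exact Ez | exact Dx0]. }
    apply (borel_subfield_of_dense_sequence d A L F hA hmet L_dist hcomp L_closed hF xs).
    + intro n. exact (HD_L _ (xs_D n)).
    + intro n. exact (HD_dist _ (xs_D n)).
    + intros w a eps He. destruct (HD_dense w a eps He) as [x [Dx Hx]].
      destruct (proj1 (Hf x) Dx) as [n En]. exists n. unfold xs. rewrite En. exact Hx.
  - (* With no sections at all, every fibre, hence every [F w], is empty. *)
    assert (HF_empty : forall w, ~ exists a, F w a).
    { intros w [a _]. destruct (HD_dense w a 1 ltac:(lra)) as [x [Dx _]].
      apply Hempty. exists x. exact Dx. }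
    split.
    + apply (sa_ext (sa_const hA False)). intro w. split; [tauto | exact (HF_empty w)].
    + exists (fun _ => None). split; [discriminate|].
      intros w Hw. exfalso. exact (HF_empty w Hw).
Qed.

Theorem mainTheorem5
  (Omega : Type) (A : (Omega -> Prop) -> Prop) (hA : sigma_algebra A)
  (X : Omega -> Type) (d : forall w, X w -> X w -> R)
  (hmet : forall w, is_metric (d w)) (hcomp : forall w, complete_metric (d w))
  (L : section X -> Prop) (hL : borel_structure d A L)
  (F : forall w, X w -> Prop) (hF : forall w, closed_in (d w) (F w)) :
  (borel_subfield d A L F <->
     (forall x : section X, L x -> measurable_ereal A (fun w => edist_set (d w) (x w) (F w)))) /\
  ((forall x : section X, L x -> measurable_ereal A (fun w => edist_set (d w) (x w) (F w))) <->
     (exists D, fundamental_family d L D /\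
        forall x : section X, D x -> measurable_ereal A (fun w => edist_set (d w) (x w) (F w)))).
Proof.
  pose proof (dist_to_F_measurable_of_borel_subfield d A L F hA hmet (proj1 hL)) as i_ii.
  pose proof (borel_subfield_of_fundamental_family d A L F hA hmet hcomp hL hF) as iii_i.
  destruct hL as [_ [_ [D0 HD0]]].
  assert (ii_iii : (forall x, L x -> measurable_ereal A (dist_to_F d F x)) ->
                   forall x, D0 x -> measurable_ereal A (dist_to_F d F x)).
  { intros Hii x Dx. exact (Hii x (proj1 (proj2 HD0) x Dx)). }
  split; split.
  - exact i_ii.
  - intros Hii. exact (iii_i D0 HD0 (ii_iii Hii)).
  - intros Hii. exists D0. split; [exact HD0 | exact (ii_iii Hii)].
  - intros [D [HD HD_dist]]. exact (i_ii (iii_i D HD HD_dist)).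
Qed.
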